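(* Let $p\ge3$ be a prime. (1) $\displaystyle \mathrm{ord}_p(\overline{F}_{p^2-1})=\sum_{k=1}^{p-1}\mu(k)\,\mathrm{ord}_p\big(\overline{G}_{\lfloor (p^2-1)/k\rfloor}\big).$ (2) For $1\le k\le p-1$ write $\lfloor (p^2-1)/k\rfloor=a_kp+b_k$ with $0\le a_k,b_k\le p-1$. Then $\mathrm{ord}_p\big(\overline{G}_{\lfloor (p^2-1)/k\rfloor}\big)=a_k(p-1-b_k)$, where $a_k=\lfloor (p-1)/k\rfloor$ and $b_k=\lfloor (p^2-1)/k\rfloor-p\lfloor (p-1)/k\rfloor$. (3) $\displaystyle \mathrm{ord}_p(\overline{F}_{p^2-1})=(p-1)-\sum_{k=1}^{p-1}\mu(k)\Big\lfloor\frac{p-1}{k}\Big\rfloor b_k.$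
   Context: For a positive integer $m$, $\overline{F}_m=\Big(\prod_{1\le h\le k\le m,\ \gcd(h,k)=1}\frac{h}{k}\Big)^{-1}$ (reciprocal of the product of all nonzero Farey fractions of order $m$) and $\overline{G}_m=\Big(\prod_{1\le h\le k\le m}\frac{h}{k}\Big)^{-1}$ (reciprocal of the product of all reduced and unreduced fractions $h/k$ with $1\le h\le k\le m$). For a nonzero rational $x$, $\mathrm{ord}_p(x)$ is the exponent of $p$ in $x$. $\mu$ is the M\''obius function. *)

From mathcomp Require Import all_boot all_order all_algebra.
Set Implicit Arguments. Unset Strict Implicit. Unset Printing Implicit Defensive.
Import Order.TTheory GRing.Theory Num.Theory.
Local Open Scope ring_scope.

Definition ordp (p : nat) (x : rat) : int :=
  (logn p `|numq x|%N)%:Z - (logn p `|denq x|%N)%:Z.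

Definition mobius (n : nat) : int :=
  if (n > 0)%N && all (fun q => logn q n == 1%N) (primes n)
  then (-1) ^+ size (primes n) else 0.

(* Fbar m = reciprocal of the product of the nonzero Farey fractions of order m *)
Definition Fbar (m : nat) : rat :=
  (\prod_(1 <= k < m.+1) \prod_(1 <= h < k.+1 | coprime h k) (h%:R / k%:R))^-1.

Definition Gbar (m : nat) : rat :=
  (\prod_(1 <= k < m.+1) \prod_(1 <= h < k.+1) (h%:R / k%:R))^-1.

From mathcomp Require Import all_boot all_order all_algebra.
From mathcomp Require Import zify ring.
Import Order.TTheory GRing.Theory Num.Theory.
Set Implicit Arguments. Unset Strict Implicit. Unset Printing Implicit Defensive.
Local Open Scope ring_scope.

(* Both ord_p(Gbar m) and ord_p(Fbar m) are sums of v_p(k) - v_p(h) over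
   pairs h <= k <= m.  This weight is invariant under scaling (h, k) by a
   common factor, so grouping the pairs by d = gcd(h, k) gives
   ord_p(Gbar m) = sum_(d <= m) ord_p(Fbar (m %/ d)), which Moebius inversion
   turns into (1); the terms with d >= p vanish because ord_p(Gbar m) = 0
   for m < p.  For m < p^2 one has v_p(n) = [p | n] for 0 < n <= m, whence
   ord_p(Gbar m) = (m %/ p) (p - 1 - m %% p), i.e. (2).  Finally (3) follows
   from (1), (2) and sum_(k <= n) mu(k) (n %/ k) = 1, itself Moebius
   inversion of the constant function 1. *)

Lemma sum_nat_widen (V : nmodType) (F : nat -> V) (P : pred nat) m N :
  (m <= N)%N -> (forall d, P d -> d <= m)%N ->
  \sum_(1 <= d < N.+1 | P d) F d = \sum_(1 <= d < m.+1 | P d) F d.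
Proof.
move=> mN Pm; rewrite (big_cat_nat _ (n := m.+1)) //=.
rewrite [X in _ + X]big1_seq ?addr0 // => d /andP[/Pm dm].
rewrite mem_index_iota => /andP[md _]; lia.
Qed.

Lemma sum_multiples (V : nmodType) (F : nat -> V) d N : (0 < d)%N ->
  \sum_(1 <= n < N.+1 | (d %| n)%N) F n = \sum_(1 <= e < (N %/ d).+1) F (d * e)%N.
Proof.
move=> d0; elim: N => [|N IH]; first by rewrite div0n !big_geq.
rewrite big_mkcond big_nat_recr //= -big_mkcond IH divnS //.
have [dvd_dN|] := boolP (d %| N.+1)%N; last by rewrite addr0.
rewrite add1n [in RHS]big_nat_recr //=; congr (_ + _).
have -> : (N %/ d).+1 = (N.+1 %/ d)%N by rewrite divnS // dvd_dN.
by rewrite mulnC divnK.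
Qed.

Lemma exchange_sum_dvd (V : nmodType) (F : nat -> nat -> V) m :
  \sum_(1 <= k < m.+1) \sum_(1 <= d < m.+1 | (d %| k)%N) F d k =
  \sum_(1 <= d < m.+1) \sum_(1 <= e < (m %/ d).+1) F d (d * e)%N.
Proof.
under eq_bigr do rewrite big_mkcond /=.
rewrite exchange_big /=; apply: eq_big_nat => d /andP[d1 _].
by rewrite -big_mkcond sum_multiples.
Qed.

Lemma mobiusM_dvd q x : prime q -> (q %| x)%N -> mobius (q * x) = 0.
Proof.
move=> q_pr q_dvd_x; have [->|x0] := posnP x; first by rewrite muln0.
have qx0 : (0 < q * x)%N by rewrite muln_gt0 prime_gt0.
have q_in : q \in primes (q * x) by rewrite mem_primes q_pr qx0 dvdn_mulr.
have : logn q (q * x) != 1%N.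
  rewrite (lognM _ (prime_gt0 q_pr) x0) (logn_prime q q_pr) eqxx.
  by rewrite -[1%N]addn0 eqn_add2l -lt0n logn_gt0 mem_primes q_pr x0 q_dvd_x.
rewrite /mobius qx0 /=; case: ifP => // /allP /(_ q q_in) /eqP ->.
by rewrite eqxx.
Qed.

Lemma mobiusM_ndvd q x : prime q -> ~~ (q %| x)%N -> mobius (q * x) = - mobius x.
Proof.
move=> q_pr q_ndvd_x; have [->|x0] := posnP x; first by rewrite muln0 oppr0.
have q0 := prime_gt0 q_pr; have qx0 : (0 < q * x)%N by rewrite muln_gt0 q0.
have q_nin : q \notin primes x by rewrite mem_primes q_pr x0.
have primes_qx : perm_eq (primes (q * x)) (q :: primes x).
  apply: uniq_perm; rewrite ?primes_uniq //= ?q_nin ?primes_uniq // => r.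
  by rewrite (primesM _ q0 x0) primes_prime // !inE.
rewrite /mobius qx0 x0 /= (perm_all _ primes_qx) (perm_size primes_qx) /=.
rewrite (lognM _ q0 x0) (logn_prime q q_pr) eqxx.
rewrite (logn_coprime (m := x)) ?prime_coprime // addn0 eqxx /=.
rewrite (@eq_in_all _ _ (fun r => logn r x == 1%N)) => [|r r_in]; last first.
  have rq : r != q by apply: contraNneq q_nin => <-.
  by rewrite (lognM _ q0 x0) (logn_prime r q_pr) (negbTE rq).
by case: ifP => _; rewrite ?oppr0 // exprS mulN1r.
Qed.

Lemma sum_mobius_dvd n N : (0 < n)%N -> (n <= N)%N ->
  \sum_(1 <= d < N.+1 | (d %| n)%N) mobius d = (n == 1%N)%:R.
Proof.
move=> n0 nN; rewrite (sum_nat_widen _ nN) => [|d]; last exact: dvdn_leq.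
case: (ltngtP n 1) => [|n1|->]; [lia | | by rewrite big_mkcond big_nat1].
have q_pr := pdiv_prime n1; have q_dvd_n := pdiv_dvd n.
set q := pdiv n in q_pr q_dvd_n *; set n' := (n %/ q)%N.
have q0 := prime_gt0 q_pr.
have En : n = (q * n')%N by rewrite mulnC divnK.
have n'0 : (0 < n')%N by move: n0; rewrite En muln_gt0 => /andP[].
have n'n : (n' <= n)%N by rewrite En leq_pmull.
(* The divisors of n = q n' prime to q are those of n'; the others are q times a divisor of n'. *)
have odd_part : \sum_(1 <= d < n.+1 | (d %| n)%N && ~~ (q %| d)%N) mobius d =
    \sum_(1 <= e < n'.+1 | (e %| n')%N && ~~ (q %| e)%N) mobius e.
  rewrite -(sum_nat_widen _ n'n) => [|d /andP[d_dvd _]]; last exact: dvdn_leq d_dvd.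
  apply: eq_bigl => d; have [|q_ndvd_d] := boolP (q %| d)%N; rewrite ?andbF // !andbT.
  by rewrite {1}En Gauss_dvdr // coprime_sym prime_coprime.
have even_part : \sum_(1 <= d < n.+1 | (d %| n)%N && (q %| d)%N) mobius d =
    - \sum_(1 <= e < n'.+1 | (e %| n')%N && ~~ (q %| e)%N) mobius e.
  rewrite (eq_bigl (fun d => (q %| d)%N && (d %| n)%N)) => [|d]; last exact: andbC.
  rewrite big_mkcondr sum_multiples // -/n' -sumrN [RHS]big_mkcond.
  apply: eq_bigr => e _; rewrite {1}En dvdn_pmul2l //.
  case: (e %| n')%N => //=; have [q_dvd_e|q_ndvd_e] /= := boolP (q %| e)%N.
    exact: mobiusM_dvd.
  exact: mobiusM_ndvd.
by rewrite (bigID (fun d => q %| d)%N) /= even_part odd_part addNr.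
Qed.

Lemma mobius_inversion (F G : nat -> int) :
  (forall m, G m = \sum_(1 <= d < m.+1) F (m %/ d)%N) -> F 0%N = 0 ->
  forall N, F N = \sum_(1 <= d < N.+1) mobius d * G (N %/ d)%N.
Proof.
move=> defG F0 N; have [->|N0] := posnP N; first by rewrite big_geq.
transitivity (\sum_(1 <= n < N.+1)
   \sum_(1 <= d < N.+1 | (d %| n)%N) mobius d * F (N %/ n)%N).
  rewrite big_nat_recl //= divn1 -mulr_suml sum_mobius_dvd // mul1r.
  rewrite big1_seq ?addr0 // => n /andP[_]; rewrite mem_index_iota => /andP[n1 nN].
  by rewrite -mulr_suml sum_mobius_dvd //; lia.
rewrite exchange_sum_dvd; apply: eq_big_nat => d /andP[d1 _].
by rewrite defG mulr_sumr; apply: eq_bigr => e _; rewrite divnMA.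
Qed.

Lemma sum_mobius_div n : (0 < n)%N ->
  \sum_(1 <= d < n.+1) mobius d * (n %/ d)%:Z = 1.
Proof.
move=> n0; rewrite -(@mobius_inversion (fun m => (0 < m)%N%:Z) Posz) ?n0 // => m.
rewrite (eq_big_nat _ _ (F2 := fun _ => 1)) => [|d /andP[d1 dm]].
  by rewrite sumr_const_nat subn1 natz.
by rewrite divn_gt0 // -ltnS dm.
Qed.

Definition dlogn (p h k : nat) : int := (logn p k)%:Z - (logn p h)%:Z.

Lemma ordp_frac p a b : (0 < a)%N -> (0 < b)%N ->
  ordp p (a%:R / b%:R) = (logn p a)%:Z - (logn p b)%:Z.
Proof.
move=> a0 b0; set x : rat := a%:R / b%:R.
have x0 : 0 < x by rewrite divr_gt0 // ltr0n.
have num0 : (0 < `|numq x|)%N by rewrite absz_gt0 lt0r_neq0 // numq_gt0.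
have den0 : (0 < `|denq x|)%N by rewrite absz_gt0 denq_neq0.
have cross : (`|numq x| * b = a * `|denq x|)%N.
  rewrite -[b]/(`|b%:Z|%N) -[a]/(`|a%:Z|%N) -!abszM; congr absz.
  apply: (@intr_inj rat); rewrite !rmorphM /= numqE /x.
  by rewrite -!pmulrn mulrAC divfK // pnatr_eq0 -lt0n.
have := congr1 (logn p) cross; rewrite !lognM // /ordp; lia.
Qed.

Lemma logn_prod p (I : eqType) (r : seq I) (P : pred I) (F : I -> nat) :
  (forall i, i \in r -> P i -> 0 < F i)%N ->
  (logn p (\prod_(i <- r | P i) F i) = \sum_(i <- r | P i) logn p (F i))%N.
Proof.
elim: r => [|x r IH] F_gt0; first by rewrite !big_nil logn1.
have F_gt0_r i : i \in r -> P i -> (0 < F i)%N.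
  by move=> i_r; apply: F_gt0; rewrite inE i_r orbT.
rewrite !big_cons; case: ifP => Px; last exact: IH.
rewrite lognM ?IH ?F_gt0 ?mem_head //.
by rewrite big_seq_cond prodn_cond_gt0 // => i /andP[]; exact: F_gt0_r.
Qed.

Lemma ordp_inv_prod_frac p m (Q : nat -> nat -> bool) :
  ordp p ((\prod_(1 <= k < m.+1) \prod_(1 <= h < k.+1 | Q h k)
            ((h%:R : rat) / k%:R))^-1) =
  \sum_(1 <= k < m.+1) \sum_(1 <= h < k.+1 | Q h k) dlogn p h k.
Proof.
have mem_pos (i : nat) n : i \in index_iota 1 n -> (0 < i)%N.
  by rewrite mem_index_iota => /andP[].
have prod_frac (r : seq nat) (P : pred nat) (f g : nat -> nat) :
    \prod_(i <- r | P i) ((f i)%:R / (g i)%:R : rat) =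
    (\prod_(i <- r | P i) f i)%:R / (\prod_(i <- r | P i) g i)%:R.
  by rewrite big_split /= prodfV !natr_prod.
have prod_pos (r : seq nat) (P : pred nat) (f : nat -> nat) :
    (forall i, i \in r -> P i -> 0 < f i)%N -> (0 < \prod_(i <- r | P i) f i)%N.
  by move=> f_gt0; rewrite big_seq_cond prodn_cond_gt0 // => i /andP[]; exact: f_gt0.
under eq_bigr do rewrite prod_frac.
rewrite prod_frac invf_div ordp_frac; last 2 first.
- by apply: (prod_pos) => k k_in _; apply: (prod_pos) => h _ _; apply: (mem_pos) k_in.
- by apply: (prod_pos) => k _ _; apply: (prod_pos) => h /mem_pos.
rewrite !logn_prod => [|k _ _|k k_in _]; last 2 first.
- by apply: (prod_pos) => h /mem_pos.
- by apply: (prod_pos) => h _ _; apply: (mem_pos) k_in.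
rewrite -!natz !natr_sum -sumrB; apply: eq_big_nat => k /andP[k1 _].
rewrite !logn_prod => [|h /mem_pos //|//].
by rewrite !natr_sum -sumrB; apply: eq_bigr => h _; rewrite /dlogn -!natz.
Qed.

Lemma dlognM p d h k : (0 < d)%N -> (0 < h)%N -> (0 < k)%N ->
  dlogn p (d * h) (d * k) = dlogn p h k.
Proof. by move=> *; rewrite /dlogn !lognM // !PoszD opprD addrACA subrr add0r. Qed.

Section GcdGrouping.

Variables (V : nmodType) (f : nat -> nat -> V).
Hypothesis f_scale : forall d h k, (0 < d)%N -> (0 < h)%N -> (0 < k)%N ->
  f (d * h)%N (d * k)%N = f h k.

Lemma sum_by_gcd k : (0 < k)%N ->
  \sum_(1 <= h < k.+1) f h k =
  \sum_(1 <= d < k.+1 | (d %| k)%N)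
     \sum_(1 <= h < (k %/ d).+1 | coprime h (k %/ d)) f h (k %/ d).
Proof.
move=> k0.
transitivity (\sum_(1 <= h < k.+1) \sum_(1 <= d < k.+1 | (d %| k)%N)
                 (if gcdn h k == d then f h k else 0)).
  apply: eq_big_nat => h _.
  rewrite -big_mkcondr (eq_bigl (fun d => d == gcdn h k)) => [|d]; last first.
    by rewrite eq_sym; case: eqP => [->|]; rewrite ?andbF ?dvdn_gcdr.
  rewrite big_nat1_eq; have g0 : (0 < gcdn h k)%N by rewrite gcdn_gt0 k0 orbT.
  by rewrite g0 ltnS dvdn_leq ?dvdn_gcdr.
rewrite exchange_big /= big_seq_cond [RHS]big_seq_cond.
apply: eq_bigr => d /andP[]; rewrite mem_index_iota => /andP[d0 _] d_dvd_k.
rewrite (bigID (fun h => d %| h)%N) /= [X in _ + X]big1 ?addr0 => [|h d_ndvd_h]; last first.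
  by case: eqP => // gcd_d; rewrite -gcd_d dvdn_gcdl in d_ndvd_h.
set k' := (k %/ d)%N; have Ek : k = (d * k')%N by rewrite mulnC divnK.
have k'0 : (0 < k')%N by move: k0; rewrite Ek muln_gt0 => /andP[].
rewrite sum_multiples // -/k' [RHS]big_mkcond; apply: eq_big_nat => h /andP[h1 _].
rewrite [k in gcdn _ k]Ek [k in f _ k]Ek -muln_gcdr -{2}(muln1 d) eqn_pmul2l //.
by rewrite /coprime; case: eqP => // _; rewrite f_scale.
Qed.

Lemma sum_pairs_by_gcd m :
  \sum_(1 <= k < m.+1) \sum_(1 <= h < k.+1) f h k =
  \sum_(1 <= d < m.+1) \sum_(1 <= k < (m %/ d).+1)
     \sum_(1 <= h < k.+1 | coprime h k) f h k.
Proof.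
transitivity (\sum_(1 <= k < m.+1) \sum_(1 <= d < m.+1 | (d %| k)%N)
   \sum_(1 <= h < (k %/ d).+1 | coprime h (k %/ d)) f h (k %/ d)).
  apply: eq_big_nat => k /andP[k0]; rewrite ltnS => km.
  by rewrite sum_by_gcd // -(sum_nat_widen _ km) => // d; apply: dvdn_leq.
rewrite exchange_sum_dvd; apply: eq_big_nat => d /andP[d0 _].
by apply: eq_bigr => e _; rewrite mulKn.
Qed.

End GcdGrouping.

Lemma ordp_Gbar p m :
  ordp p (Gbar m) = \sum_(1 <= k < m.+1) \sum_(1 <= h < k.+1) dlogn p h k.
Proof. exact: (ordp_inv_prod_frac p m (fun _ _ => true)). Qed.

Lemma ordp_Fbar p m :
  ordp p (Fbar m) = \sum_(1 <= k < m.+1) \sum_(1 <= h < k.+1 | coprime h k) dlogn p h k.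
Proof. exact: ordp_inv_prod_frac. Qed.

Lemma ordp_Gbar_sum_Fbar p m :
  ordp p (Gbar m) = \sum_(1 <= d < m.+1) ordp p (Fbar (m %/ d)).
Proof.
rewrite ordp_Gbar sum_pairs_by_gcd; last exact: dlognM.
by apply: eq_bigr => d _; rewrite ordp_Fbar.
Qed.

Lemma ordp_Fbar_mobius p N :
  ordp p (Fbar N) = \sum_(1 <= d < N.+1) mobius d * ordp p (Gbar (N %/ d)).
Proof.
apply: (@mobius_inversion (fun n => ordp p (Fbar n)) (fun n => ordp p (Gbar n))).
  exact: ordp_Gbar_sum_Fbar.
by rewrite ordp_Fbar big_geq.
Qed.

Lemma logn_lt_sq p n : prime p -> (0 < n)%N -> (n < p * p)%N ->
  logn p n = (p %| n)%N.
Proof.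
move=> p_pr n0 n_lt; have [p_dvd_n|] := boolP (p %| n)%N; last first.
  by move=> p_ndvd_n; rewrite logn_coprime // prime_coprime.
have p0 := prime_gt0 p_pr; have En : n = (p * (n %/ p))%N by rewrite mulnC divnK.
have q0 : (0 < n %/ p)%N by rewrite divn_gt0 // dvdn_leq.
have qp : (n %/ p < p)%N by rewrite ltn_divLR.
rewrite En lognM // (logn_prime p p_pr) eqxx logn_coprime // prime_coprime //.
by apply/negP => /(dvdn_leq q0); rewrite leqNgt qp.
Qed.

Lemma sum_logn_lt_sq p k : prime p -> (k < p * p)%N ->
  \sum_(1 <= h < k.+1) (logn p h)%:Z = (k %/ p)%:Z.
Proof.
move=> p_pr; elim: k => [|k IH] k_lt; first by rewrite big_geq ?div0n.
rewrite big_nat_recr //= IH 1?ltnW // logn_lt_sq //.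
by rewrite divnS ?prime_gt0 // PoszD addrC.
Qed.

Lemma ordp_Gbar_lt_sq p m : prime p -> (m < p * p)%N ->
  ordp p (Gbar m) = (m %/ p)%:Z * ((p - 1)%:Z - (m %% p)%:Z).
Proof.
move=> p_pr; have p0 := prime_gt0 p_pr; rewrite ordp_Gbar.
elim: m => [|m IH] m_lt; first by rewrite big_geq // div0n mul0r.
rewrite big_nat_recr //= IH 1?ltnW //.
(* column k = m.+1 adds k [p | k] - k %/ p, as v_p(n) = [p | n] below p^2 *)
rewrite /dlogn sumrB sum_logn_lt_sq // sumr_const_nat logn_lt_sq //.
rewrite divnS // modnS.
have := divn_eq m p; have := ltn_pmod m p0; have := divn_eq m.+1 p; rewrite divnS //.
case: (p %| m.+1)%N => /=; rewrite ?mul0rn ?natz ?subn1 /=; nia.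
Qed.

Lemma ordp_Gbar_lt p m : prime p -> (m < p)%N -> ordp p (Gbar m) = 0.
Proof.
move=> p_pr m_lt; rewrite ordp_Gbar_lt_sq ?divn_small ?mul0r //.
by rewrite (leq_trans m_lt) // leq_pmull // prime_gt0.
Qed.

Lemma divn_sq_pred p k : (0 < p)%N -> (0 < k)%N ->
  ((p ^ 2 - 1) %/ k %/ p = (p - 1) %/ k)%N.
Proof.
move=> p0 k0; rewrite -divnMA; apply/eqP; rewrite eqn_leq.
have kp0 : (0 < k * p)%N by rewrite muln_gt0 k0.
rewrite -ltnS ltn_divLR // leq_divRL //.
have lo := leq_divM (p - 1) k; have hi := ltn_ceil (p - 1) k0.
by apply/andP; split; nia.
Qed.

Lemma ordp_Gbar_sq_pred_div p k : prime p -> (1 <= k <= p - 1)%N ->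
  let a : int := ((p - 1) %/ k)%:Z in
  let b : int := ((p ^ 2 - 1) %/ k)%:Z - (p * ((p - 1) %/ k))%:Z in
  [/\ 0 <= a <= (p - 1)%:Z, 0 <= b <= (p - 1)%:Z,
      ((p ^ 2 - 1) %/ k)%:Z = a * p%:Z + b &
      ordp p (Gbar ((p ^ 2 - 1) %/ k)) = a * ((p - 1)%:Z - b)].
Proof.
move=> p_pr /andP[k0 kp] a b; have p0 := prime_gt0 p_pr.
have M_lt : ((p ^ 2 - 1) %/ k < p * p)%N.
  by rewrite (leq_ltn_trans (leq_div _ _)) // -mulnn; lia.
have a_le : ((p - 1) %/ k <= p - 1)%N by exact: leq_div.
rewrite /a /b ordp_Gbar_lt_sq // (divn_sq_pred p0 k0).
have := divn_eq ((p ^ 2 - 1) %/ k) p; have := ltn_pmod ((p ^ 2 - 1) %/ k) p0.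
rewrite divn_sq_pred //; set M := ((p ^ 2 - 1) %/ k)%N; set q := ((p - 1) %/ k)%N.
move=> r_lt EM; have -> : M%:Z - (p * q)%:Z = (M %% p)%:Z by rewrite {1}EM mulnC; lia.
by split=> //; lia.
Qed.

Lemma ordp_Fbar_sq_pred p : prime p ->
  ordp p (Fbar (p ^ 2 - 1)) =
    \sum_(1 <= k < p) mobius k * ordp p (Gbar ((p ^ 2 - 1) %/ k)).
Proof.
move=> p_pr; have p0 := prime_gt0 p_pr.
have pN : (p <= (p ^ 2 - 1).+1)%N by rewrite -mulnn; nia.
rewrite ordp_Fbar_mobius (big_cat_nat _ pN) //= [X in _ + X]big1_seq ?addr0 //.
move=> d /andP[_]; rewrite mem_index_iota => /andP[pd _].
rewrite ordp_Gbar_lt ?mulr0 // ltn_divLR ?(leq_trans p0 pd) //.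
by rewrite (leq_trans _ (leq_mul (leqnn p) pd)) // -mulnn; lia.
Qed.

Theorem theorem4p8 (p : nat) (hp : prime p) (hp3 : (3 <= p)%N) :
  (* (1) *)
  ordp p (Fbar (p ^ 2 - 1)) =
    \sum_(1 <= k < p) mobius k * ordp p (Gbar ((p ^ 2 - 1) %/ k))
  /\
  (* (2) *)
  (forall k : nat, (1 <= k <= p - 1)%N ->
     let a : int := ((p - 1) %/ k)%:Z in
     let b : int := ((p ^ 2 - 1) %/ k)%:Z - (p * ((p - 1) %/ k))%:Z in
     [/\ 0 <= a <= (p - 1)%:Z, 0 <= b <= (p - 1)%:Z,
         ((p ^ 2 - 1) %/ k)%:Z = a * p%:Z + b &
         ordp p (Gbar ((p ^ 2 - 1) %/ k)) = a * ((p - 1)%:Z - b)])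
  /\
  (* (3) *)
  ordp p (Fbar (p ^ 2 - 1)) =
    (p - 1)%:Z
    - \sum_(1 <= k < p) mobius k * ((p - 1) %/ k)%:Z
        * (((p ^ 2 - 1) %/ k)%:Z - (p * ((p - 1) %/ k))%:Z).
Proof.
have part2 := ordp_Gbar_sq_pred_div hp.
split; first exact: ordp_Fbar_sq_pred.
split; first exact: part2.
have Ep : (p - 1).+1 = p by rewrite subn1 prednK // prime_gt0.
rewrite ordp_Fbar_sq_pred // -[X in X - _]mulr1.
rewrite -(sum_mobius_div (n := p - 1)) ?subn_gt0 ?(leq_trans _ hp3) // Ep.
rewrite mulr_sumr -sumrB; apply: eq_big_nat => k /andP[k0 kp].
have k_range : (1 <= k <= p - 1)%N by rewrite k0 -ltnS Ep.
by have [_ _ _ ->] := part2 k k_range; ring.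
Qed.
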